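(* If $s$ is a normalized fully ternary string of length $n$ which is bad (in the sense defined in the context), then $d_{\rm g}(s)=n-2$.
   Context: Strings are finite words over $\{0,1,2,\dots\}$. A string is \emph{normalized} if no two adjacent symbols are equal; the \emph{normalization} of a string replaces every maximal run of identical symbols by a single copy. A string is \emph{fully $k$-ary} if the set of symbols occurring in it is exactly $\{0,\dots,k-1\}$; fully ternary means fully $3$-ary. For a normalized string $s=s_1\cdots s_n$ and $1\le i\le n$, the flip $f^{(i)}(s)$ is the normalization of $s_i\cdots s_1 s_{i+1}\cdots s_n$. The grouping distance $d_{\rm g}(s)$ of a normalized fully $k$-ary string is the minimum number of flips needed to transform $s$ into a string of length $k$. Regular-expression notation: $w^i$ is $i$ repetitions of $w$, $w^*$ is zero or more, $w^+$ one or more, $w^{\ge 2}$ two or more repetitions; $\{a,b\}$ denotes a single symbol that is either $a$ or $b$ (chosen independently at each occurrence). A normalized fully ternary string is \emph{bad} (for grouping) if, after some relabelling (bijection) of the symbols $\{0,1,2\}$, it is of one of the following types: (I) $0(12)^{\ge 2}$ or $02(12)^+$; (II) $(\{0,1\}2)^+$ or $(2\{0,1\})^+2$; (III) $0(21)^+02(12)^*$; (IV) one of the eight strings $210212$, $021012$, $0120212$, $1201212$, $02101212$, $20210212$, $020210212$, $120120212$. All other normalized fully ternary strings are \emph{good}. *)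

From mathcomp Require Import all_boot.
Set Implicit Arguments. Unset Strict Implicit. Unset Printing Implicit Defensive.

Definition normalized (s : seq nat) : bool := sorted (fun x y => x != y) s.

Fixpoint normalize (s : seq nat) : seq nat :=
  match s with
  | [::] => [::]
  | x :: t =>
      let t' := normalize t in
      match t' with
      | y :: _ => if x == y then t' else x :: t'
      | [::] => [:: x]
      end
  end.

Definition fully (k : nat) (s : seq nat) : Prop := forall x, (x \in s) = (x < k).

Definition flip (i : nat) (s : seq nat) : seq nat :=
  normalize (rev (take i s) ++ drop i s).

Fixpoint reach (m : nat) (s t : seq nat) : Prop :=
  match m with
  | 0 => s = t
  | m'.+1 => exists i, 1 <= i <= size s /\ reach m' (flip i s) t
  end.

Definition grouping_distance (k : nat) (s : seq nat) (d : nat) : Prop :=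
  (exists t, reach d s t /\ size t = k) /\
  (forall m t, reach m s t -> size t = k -> d <= m).

Definition rep (w : seq nat) (m : nat) : seq nat := flatten (nseq m w).

Definition badI (t : seq nat) : Prop :=
  (exists m, 2 <= m /\ t = 0 :: rep [:: 1; 2] m) \/
  (exists m, 1 <= m /\ t = [:: 0; 2] ++ rep [:: 1; 2] m).

Definition badII (t : seq nat) : Prop :=
  (exists u : seq nat, u != [::] /\ all (fun x => x < 2) u /\
     t = flatten (map (fun x => [:: x; 2]) u)) \/
  (exists u : seq nat, u != [::] /\ all (fun x => x < 2) u /\
     t = flatten (map (fun x => [:: 2; x]) u) ++ [:: 2]).

Definition badIII (t : seq nat) : Prop :=
  exists m p, 1 <= m /\ t = 0 :: rep [:: 2; 1] m ++ [:: 0; 2] ++ rep [:: 1; 2] p.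

Definition badIV (t : seq nat) : Prop :=
  t \in [:: [:: 2;1;0;2;1;2]; [:: 0;2;1;0;1;2]; [:: 0;1;2;0;2;1;2];
            [:: 1;2;0;1;2;1;2]; [:: 0;2;1;0;1;2;1;2]; [:: 2;0;2;1;0;2;1;2];
            [:: 0;2;0;2;1;0;2;1;2]; [:: 1;2;0;1;2;0;2;1;2]].

(* s is bad: after relabelling by a bijection of {0,1,2}
   (0 |-> a, 1 |-> b, 2 |-> c), it is of type I-IV *)
Definition bad (s : seq nat) : Prop :=
  exists a b c t, perm_eq [:: a; b; c] [:: 0; 1; 2] /\
    (badI t \/ badII t \/ badIII t \/ badIV t) /\
    s = map (fun x => nth 0 [:: a; b; c] x) t.

From mathcomp Require Import all_boot zify.
Set Implicit Arguments. Unset Strict Implicit. Unset Printing Implicit Defensive.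

(* A flip shortens a normalized string by at most one symbol, and only when it reverses
   a prefix x w standing just before a second occurrence of the first symbol x.  The
   bad fully ternary strings are closed under such shortening flips and none of them has
   length 3, so any sequence of flips from a bad string of length n down to length 3
   contains a flip that does not shorten: at least n - 2 flips are needed.  Conversely,
   a bad string either repeats its first symbol, and one shortening flip leads to a
   shorter bad string, or it is c followed by an alternation of a and b, which reaches
   length 3 in n - 2 flips. *)

Lemma normalized_cons2 x y l :
  normalized [:: x, y & l] = (x != y) && normalized (y :: l).
Proof. by []. Qed.

Lemma normalized_cat l1 x l2 :
  normalized (l1 ++ x :: l2) = normalized (rcons l1 x) && normalized (x :: l2).
Proof.
elim: l1 => [|y [|z l1] IH] //=; first by rewrite andbT.
by move: IH; rewrite /normalized /= => ->; rewrite andbA.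
Qed.

Lemma normalized_rev l : normalized (rev l) = normalized l.
Proof.
rewrite /normalized rev_sorted.
by apply/idP/idP; apply: sub_sorted => x y /=; rewrite eq_sym.
Qed.

Lemma normalized_catl l1 l2 : normalized (l1 ++ l2) -> normalized l1.
Proof. by case/cat_sorted2. Qed.

Lemma normalized_catr l1 l2 : normalized (l1 ++ l2) -> normalized l2.
Proof. by case/cat_sorted2. Qed.

Lemma normalized_map_inv (f : nat -> nat) l : normalized (map f l) -> normalized l.
Proof. by rewrite /normalized sorted_map; apply: sub_sorted => x y /=; apply: contra => /eqP ->. Qed.

Lemma normalize_id l : normalized l -> normalize l = l.
Proof.
elim: l => [|x l IH] //= H.
rewrite IH; last by move: H; case: l {IH} => //= y l /andP[].
by case: l H {IH} => //= y l /andP[/negbTE ->].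
Qed.

Lemma normalize_cons_head x l : exists t, normalize (x :: l) = x :: t.
Proof.
rewrite /=; case: (normalize l) => [|y t]; first by exists [::].
by case: eqP => [->|_]; eexists.
Qed.

Lemma normalize_dup l1 x l2 :
  normalize (l1 ++ x :: x :: l2) = normalize (l1 ++ x :: l2).
Proof.
elim: l1 => [|y l1 IH]; last by rewrite /= IH.
have [t Ht] := normalize_cons_head x l2.
by rewrite /= -[normalize l2]/(normalize l2) -/(normalize (x :: l2)) Ht eqxx.
Qed.

Lemma normalized_normalize l : normalized (normalize l).
Proof.
elim: l => [|x l IH] //=.
case E: (normalize l) => [|y t] //.
case: eqP => [_|/eqP ne]; first by rewrite -E.
by rewrite normalized_cons2 ne -E.
Qed.

Lemma mem_normalize z l : (z \in normalize l) = (z \in l).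
Proof.
elim: l z => [|x l IH] z //=.
case E: (normalize l) => [|y t].
  by move: (IH z); rewrite E in_nil !inE => <-; rewrite orbF.
case: eqP => [ey|_]; last by rewrite in_cons -E IH.
have yl : y \in l by rewrite -IH E inE eqxx.
by rewrite -E IH in_cons; case: eqP => // ->; rewrite ey yl.
Qed.

Lemma normalize_map (f : nat -> nat) l : {in l &, injective f} ->
  normalize (map f l) = map f (normalize l).
Proof.
elim: l => [|x l IH] //= f_inj.
rewrite IH; last by move=> a b Ha Hb; apply: f_inj; rewrite inE ?Ha ?Hb orbT.
case E: (normalize l) => [|y t] //=.
have yl : y \in l by rewrite -mem_normalize E inE eqxx.
case: eqP => [/f_inj ->|ne]; rewrite ?inE ?eqxx ?yl ?orbT //.
by case: eqP => //= exy; case: ne; rewrite exy.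
Qed.

(** * Flips *)

Lemma flip_repeat a w r : normalized (a :: w ++ a :: r) ->
  flip (size w).+1 (a :: w ++ a :: r) = rev w ++ a :: r.
Proof.
move=> H.
rewrite /flip (take_size_cat _ (s1 := a :: w)) // (drop_size_cat _ (s1 := a :: w)) //.
rewrite rev_cons -cats1 -catA /= normalize_dup normalize_id //.
move: H; rewrite -cat_cons !normalized_cat => /andP[H1 ->].
by rewrite andbT -rev_cons normalized_rev; move: H1; rewrite -cats1 => /normalized_catl.
Qed.

Lemma size_flip_cases s i : normalized s -> 1 <= i <= size s ->
  size (flip i s) = size s \/
  exists a w r, s = a :: w ++ a :: r /\ i = (size w).+1.
Proof.
case: s => [|a s'] // Hn; case: i => [|j] // /andP[_ Hj].
have Hs : s' = take j s' ++ drop j s' by rewrite cat_take_drop.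
have Hsz : size (take j s') = j by rewrite size_takel.
rewrite /flip [take _ _]/= [drop _ _]/=.
case Ed: (drop j s') Hs => [|q r] Hs.
  left; rewrite cats0 normalize_id; first by rewrite size_rev /= {2}Hs cats0.
  by rewrite normalized_rev; move: Hn; rewrite {1}Hs cats0.
case: (eqVneq q a) => [eqa|neq].
  by right; exists a, (take j s'), r; rewrite {1}Hs -eqa Hsz.
left; rewrite normalize_id; first by rewrite {2}Hs size_cat size_rev /= size_cat.
rewrite rev_cons -cats1 -catA /= normalized_cat normalized_cons2 eq_sym neq /=.
move: Hn; rewrite {1}Hs -cat_cons => Hn.
by rewrite -rev_cons normalized_rev (normalized_catl Hn) -[path _ q r]/(normalized (q :: r)) (normalized_catr Hn).
Qed.

Lemma size_flip_ge s i : normalized s -> 1 <= i <= size s ->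
  size s <= (size (flip i s)).+1.
Proof.
move=> Hn Hi; case: (size_flip_cases Hn Hi) => [->//|[a [w [r [Es Ei]]]]].
by rewrite Ei Es flip_repeat -?Es // Es /= !size_cat /= size_rev.
Qed.

Lemma mem_flip z i s : (z \in flip i s) = (z \in s).
Proof. by rewrite /flip mem_normalize mem_cat mem_rev -mem_cat cat_take_drop. Qed.

Lemma normalized_flip i s : normalized (flip i s).
Proof. exact: normalized_normalize. Qed.

Lemma flip_map (f : nat -> nat) i s : {in s &, injective f} ->
  flip i (map f s) = map f (flip i s).
Proof.
move=> f_inj; rewrite /flip -map_take -map_drop -map_rev -map_cat normalize_map //.
have sub z : z \in rev (take i s) ++ drop i s -> z \in s.
  by rewrite mem_cat mem_rev -mem_cat cat_take_drop.
by move=> x y /sub hx /sub hy; apply: f_inj.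
Qed.

Lemma reach_size m s t : normalized s -> reach m s t -> size s <= size t + m.
Proof.
elim: m s => [|m IH] s Hn /=; first by move=> ->; rewrite addn0.
case=> i [Hi Hr]; have := IH _ (normalized_flip i s) Hr.
by have := size_flip_ge Hn Hi; lia.
Qed.

Definition reaches_size k m s := exists t, reach m s t /\ size t = k.

Definition shrinkable s := exists2 i, 1 <= i <= size s & size (flip i s) < size s.

Lemma head_repeat_shrinkable a w r : normalized (a :: w ++ a :: r) ->
  shrinkable (a :: w ++ a :: r).
Proof.
move=> Hn; exists (size w).+1; first by rewrite /= size_cat /=; lia.
by rewrite flip_repeat // /= !size_cat size_rev /=.
Qed.

(** * Classes closed under shrinking flips *)

Section ShrinkClosed.

Variables (P : seq nat -> Prop) (k : nat).
Hypothesis P_size : forall s, P s -> k < size s.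
Hypothesis P_flip : forall s i, normalized s -> P s -> 1 <= i <= size s ->
  size (flip i s) < size s -> P (flip i s).

Lemma shrink_closed_reach_lb m s t : normalized s -> P s -> reach m s t ->
  size t = k -> size s - k < m.
Proof.
elim: m s => [|m IH] s Hn Ps /=; first by move=> <- Et; have := P_size Ps; lia.
case=> i [Hi Hr] Et; have := size_flip_ge Hn Hi.
case: (ltnP (size (flip i s)) (size s)) => shrink.
  by have := IH _ (normalized_flip i s) (P_flip Hn Ps Hi shrink) Hr Et; lia.
by have := reach_size (normalized_flip i s) Hr; lia.
Qed.

Hypothesis P_shrinkable_or_reaches : forall s, normalized s -> P s ->
  shrinkable s \/ reaches_size k (size s - k).+1 s.

Lemma shrink_closed_reaches s : normalized s -> P s ->
  reaches_size k (size s - k).+1 s.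
Proof.
elim: {s}(size s) {-2}s (leqnn (size s)) => [|n IHn] s Hs Hn Ps.
  by have := P_size Ps; lia.
case: (P_shrinkable_or_reaches Hn Ps) => [[i Hi shrink]|//].
have Pf := P_flip Hn Ps Hi shrink.
have [t [Hr Et]] := IHn _ (leq_trans shrink Hs) (normalized_flip i s) Pf.
exists t; split=> //.
have -> : size s - k = (size (flip i s) - k).+1.
  by have := size_flip_ge Hn Hi; have := P_size Pf; lia.
by exists i.
Qed.

Lemma shrink_closed_grouping_distance s : normalized s -> P s ->
  grouping_distance k s (size s - k).+1.
Proof.
move=> Hn Ps; split; first exact: shrink_closed_reaches.
by move=> m t Hr Et; apply: shrink_closed_reach_lb Hr Et.
Qed.

End ShrinkClosed.

(** * Alternating strings *)

Fixpoint alt (a b : nat) n : seq nat := if n is n'.+1 then a :: alt b a n' else [::].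

Lemma size_alt a b n : size (alt a b n) = n.
Proof. by elim: n a b => [|n IH] a b //=; rewrite IH. Qed.

Lemma map_alt (f : nat -> nat) a b n : map f (alt a b n) = alt (f a) (f b) n.
Proof. by elim: n a b => [|n IH] a b //=; rewrite IH. Qed.

Lemma normalized_alt_rcons a b c n : a != b -> c != a -> c != b ->
  normalized (alt a b n ++ [:: c]).
Proof.
elim: n a b => [|[|n] IH] a b ab ca cb //; first by rewrite /normalized /= eq_sym ca.
rewrite [alt a b _]/= cat_cons normalized_cons2 ab.
by rewrite -[b :: _]/(alt b a n.+1 ++ [:: c]) IH // eq_sym.
Qed.

Lemma alt_reaches_size3 a b c L : a != b -> c != a -> c != b ->
  reaches_size 3 L (alt a b L.+2 ++ [:: c]).
Proof.
elim: L a b => [|L IH] a b ab ca cb; first by exists [:: a; b; c].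
have ba : b != a by rewrite eq_sym.
have [t [Hr Et]] := IH b a ba cb ca.
exists t; split=> //; exists 2; split; first by rewrite size_cat size_alt.
have -> : alt a b L.+3 ++ [:: c] = a :: [:: b] ++ a :: (alt b a L ++ [:: c]) by [].
by rewrite (flip_repeat (w := [:: b])) // -[a :: _]/(alt a b L.+3 ++ [:: c]) normalized_alt_rcons.
Qed.

(* Reversing the whole string makes it alternating; from then on each flip of the first
   two symbols shortens it by one. *)
Lemma rev_alt_reaches_size3 s a b c L : rev s = alt a b L ++ [:: c] -> 3 < size s ->
  a != b -> c != a -> c != b -> reaches_size 3 (size s - 3).+1 s.
Proof.
move=> Er Hs ab ca cb.
have HL : size s = L.+1 by rewrite -size_rev Er size_cat size_alt addn1.
have [t [Hr Et]] := @alt_reaches_size3 a b c (L - 2) ab ca cb.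
exists t; split=> //; exists (size s); split; first by lia.
have Hn : normalized (rev s) by rewrite Er normalized_alt_rcons.
rewrite /flip take_size drop_size cats0 normalize_id // Er.
by rewrite HL subSS; move: Hr; have -> : (L - 2).+2 = L by lia.
Qed.

(** * Bad strings *)

Lemma repS w m : rep w m.+1 = w ++ rep w m. Proof. by []. Qed.

Lemma repSr w m : rep w m.+1 = rep w m ++ w.
Proof.
elim: m => [|m IH]; first by rewrite /rep /= cats0.
by rewrite repS {1}IH catA.
Qed.

Lemma mem_rep z w m : z \in rep w m -> z \in w.
Proof. by elim: m => [|m IH] //; rewrite repS mem_cat => /orP[//|/IH]. Qed.

Lemma size_rep w m : size (rep w m) = size w * m.
Proof. by elim: m => [|m IH]; rewrite ?muln0 // repS size_cat IH mulnS. Qed.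

Lemma all_rep (p : pred nat) w m : all p w -> all p (rep w m).
Proof. by move=> H; elim: m => [|m IH] //; rewrite repS all_cat H. Qed.

Lemma rev_rep2 x y m : rev (rep [:: x; y] m) = rep [:: y; x] m.
Proof. by elim: m => [|m IH] //; rewrite repS rev_cat IH repSr. Qed.

Lemma rep2_alt x y m : rep [:: x; y] m = alt x y m.*2.
Proof. by elim: m => [|m IH] //; rewrite repS IH doubleS. Qed.

Lemma rep2_rcons_alt x y m : rep [:: x; y] m ++ [:: x] = alt x y m.*2.+1.
Proof. by elim: m => [|m IH] //; rewrite repS -catA IH doubleS. Qed.

Definition pad2 (u : seq nat) : seq nat := flatten (map (fun x => [:: x; 2]) u).

Lemma pad2_cons x u : pad2 (x :: u) = [:: x, 2 & pad2 u]. Proof. by []. Qed.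

Lemma pad2_cat u1 u2 : pad2 (u1 ++ u2) = pad2 u1 ++ pad2 u2.
Proof. by rewrite /pad2 map_cat flatten_cat. Qed.

Lemma size_pad2 u : size (pad2 u) = (size u).*2.
Proof. by elim: u => [|x u IH] //=; rewrite IH doubleS. Qed.

Lemma all_pad2 (p : pred nat) u : all p u -> p 2 -> all p (pad2 u).
Proof. by move=> H p2; elim: u H => [|x u IH] //= /andP[-> /IH ->]; rewrite p2. Qed.

Lemma rev_pad2 u : rev (pad2 u) ++ [:: 2] = 2 :: pad2 (rev u).
Proof.
elim: u => [|x u IH] //.
rewrite pad2_cons rev_cons rev_cons -!cats1 -!catA /=.
by rewrite -[[:: 2; x; 2]]/([:: 2] ++ [:: x; 2]) catA IH rev_cons -cats1 pad2_cat.
Qed.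

Lemma pad2_shift u : flatten (map (fun x => [:: 2; x]) u) ++ [:: 2] = 2 :: pad2 u.
Proof. by elim: u => [|x u IH] //=; rewrite IH. Qed.

Lemma rep2_pad2 y m : rep [:: y; 2] m = pad2 (nseq m y).
Proof. by elim: m => [|m IH] //; rewrite repS IH. Qed.

Lemma pad2_split_sym a u w r : a != 2 -> pad2 u = w ++ a :: r ->
  exists u1 u2, [/\ u = u1 ++ a :: u2, w = pad2 u1 & r = 2 :: pad2 u2].
Proof.
move=> a2; elim: u w => [|x u IH] [|y [|z w]] //; rewrite pad2_cons /=.
- by case=> -> <-; exists [::], u.
- by case=> _ e; rewrite e eqxx in a2.
case=> -> <- /IH [u1 [u2 [-> -> ->]]].
by exists (y :: u1), u2.
Qed.

Lemma pad2_split2 u w r : 2 \notin u -> pad2 u = w ++ 2 :: r ->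
  exists u1 u2, [/\ u1 != [::], u = u1 ++ u2, w ++ [:: 2] = pad2 u1 & r = pad2 u2].
Proof.
elim: u w => [|x u IH] [|y [|z w]] //; rewrite pad2_cons /= ?inE.
- by move=> H [e]; rewrite e eqxx in H.
- by move=> _ [-> <-]; exists [:: y], u.
move=> /norP[_ Hu] [-> <- /(IH _ Hu) [u1 [u2 [_ -> e ->]]]].
by exists (y :: u1), u2; rewrite /= e.
Qed.

Lemma cat_cons_notin_inj (a : nat) l1 r1 l2 r2 : a \notin l2 -> a \notin r2 ->
  l1 ++ a :: r1 = l2 ++ a :: r2 -> l1 = l2 /\ r1 = r2.
Proof.
elim: l1 l2 => [|x l1 IH] [|y l2] //=.
- by move=> _ _ [->].
- by move=> H _ [e _]; rewrite inE e eqxx in H.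
- by move=> _ H [e e']; rewrite -e' mem_cat inE eqxx orbT in H.
by rewrite inE => /norP[_ H1] H2 [-> /(IH _ H1 H2) [-> ->]].
Qed.

Definition canon_bad t := badI t \/ badII t \/ badIII t \/ badIV t.

Definition relabel a b c x := nth 0 [:: a; b; c] x.

Definition badIV_words : seq (seq nat) :=
  [:: [:: 2;1;0;2;1;2]; [:: 0;2;1;0;1;2]; [:: 0;1;2;0;2;1;2];
      [:: 1;2;0;1;2;1;2]; [:: 0;2;1;0;1;2;1;2]; [:: 2;0;2;1;0;2;1;2];
      [:: 0;2;0;2;1;0;2;1;2]; [:: 1;2;0;1;2;0;2;1;2]].

Lemma badIV_words_all (p : pred (seq nat)) t : badIV t -> all p badIV_words -> p t.
Proof. by move=> Ht /allP; apply. Qed.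

Lemma canon_bad_lt3 t : canon_bad t -> all (fun x => x < 3) t.
Proof.
case=> [[[m [_ ->]]|[m [_ ->]]]|[[[u [_ [Hu ->]]]|[u [_ [Hu ->]]]]|[[m [p [_ ->]]]|H4]]].
- by rewrite /= all_rep.
- by rewrite /= all_rep.
- by apply: all_pad2 => //; apply: sub_all Hu => x /= h; lia.
- by rewrite pad2_shift /= all_pad2 //; apply: sub_all Hu => x /= h; lia.
- by rewrite /= all_cat /= !all_rep.
- exact: badIV_words_all H4 _.
Qed.

Lemma canon_bad_size3 t : canon_bad t -> size t = 3 -> ~~ uniq t.
Proof.
case=> [[[m [hm ->]]|[m [hm ->]]]|[[[u [_ [Hu ->]]]|[u [_ [Hu ->]]]]|[[m [p [hm ->]]]|H4]]].
- by rewrite /= size_rep /=; lia.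
- by rewrite /= size_rep /=; lia.
- by rewrite -/(pad2 u) size_pad2; lia.
- rewrite pad2_shift /= size_pad2; case: u Hu => [|x [|y u]] //= _ _.
  by rewrite !inE eqxx orbT.
- by rewrite /= size_cat /= !size_rep /=; lia.
- by move=> Ht; have := badIV_words_all (p := fun t => (size t == 3) ==> ~~ uniq t) H4 isT; rewrite Ht.
Qed.

Section Relabel.

Variables a b c : nat.
Hypothesis abc : perm_eq [:: a; b; c] [:: 0; 1; 2].

Lemma relabel_lt3 x : x < 3 -> relabel a b c x < 3.
Proof.
have lt z : z \in [:: a; b; c] -> z < 3 by rewrite (perm_mem abc) !inE => /or3P[]/eqP->.
by case: x => [|[|[|x]]] // _; apply: lt; rewrite !inE eqxx ?orbT.
Qed.

Lemma relabel_inj x y : x < 3 -> y < 3 -> relabel a b c x = relabel a b c y -> x = y.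
Proof.
have /= := perm_uniq abc; rewrite !inE !negb_or => /andP[/andP[ab ac] /andP[bc _]].
case: x => [|[|[|x]]] //; case: y => [|[|[|y]]] // _ _; rewrite /relabel /= => e;
  by move: ab ac bc; rewrite e eqxx ?andbF.
Qed.

Lemma relabel_neq x y : x < 3 -> y < 3 -> x != y -> relabel a b c x != relabel a b c y.
Proof. by move=> hx hy; apply: contra => /eqP/(relabel_inj hx hy)/eqP. Qed.

Lemma flip_relabel i t : canon_bad t ->
  flip i (map (relabel a b c) t) = map (relabel a b c) (flip i t).
Proof.
move/canon_bad_lt3/allP=> t3; apply: flip_map => x y /t3 hx /t3 hy.
exact: relabel_inj.
Qed.

Lemma fully_relabel t : canon_bad t -> fully 3 (map (relabel a b c) t) -> fully 3 t.
Proof.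
move=> Bt F x; have t3 := allP (canon_bad_lt3 Bt).
apply/idP/idP; first exact: t3.
move=> hx; have := relabel_lt3 hx; rewrite -F => /mapP [y hy e].
by rewrite (relabel_inj hx (t3 y hy) e).
Qed.

Lemma bad_relabel s : bad s -> bad (map (relabel a b c) s).
Proof.
move=> [a' [b' [c' [t [abc' [Bt ->]]]]]].
exists (relabel a b c a'), (relabel a b c b'), (relabel a b c c'), t; split.
  by apply: perm_trans (perm_map (relabel a b c) abc') _.
rewrite -map_comp; split=> //; apply/eq_in_map => x /(allP (canon_bad_lt3 Bt)).
by case: x => [|[|[|x]]].
Qed.

End Relabel.

Lemma relabel_id t : all (fun x => x < 3) t -> map (relabel 0 1 2) t = t.
Proof. by elim: t => [|x t IH] //= /andP[hx /IH ->]; case: x hx => [|[|[|x]]]. Qed.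

Lemma canon_bad_bad t : canon_bad t -> bad t.
Proof. by move=> Bt; exists 0, 1, 2, t; rewrite relabel_id //; apply: canon_bad_lt3. Qed.

Lemma bad_size s : bad s -> fully 3 s -> 3 < size s.
Proof.
move=> [a [b [c [t [abc [Bt ->]]]]]] F.
have sub : {subset [:: 0; 1; 2] <= map (relabel a b c) t}.
  by move=> x; rewrite F !inE => /or3P[]/eqP->.
have := uniq_leq_size (isT : uniq [:: 0; 1; 2]) sub; rewrite leq_eqVlt => /orP[/eqP e|//].
have /map_uniq U := leq_size_uniq (isT : uniq [:: 0; 1; 2]) sub (eq_leq (esym e)).
by have := canon_bad_size3 Bt; rewrite -(size_map (relabel a b c)) -e U => /(_ erefl).
Qed.

(** * Shrinking flips preserve badness *)

Lemma bad_I1 m : 2 <= m -> bad (0 :: rep [:: 1; 2] m).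
Proof. by move=> hm; apply: canon_bad_bad; left; left; exists m. Qed.

Lemma bad_I2 m : 1 <= m -> bad ([:: 0; 2] ++ rep [:: 1; 2] m).
Proof. by move=> hm; apply: canon_bad_bad; left; right; exists m. Qed.

Lemma bad_II1 u : u != [::] -> all (fun x => x < 2) u -> bad (pad2 u).
Proof. by move=> u0 u2; apply: canon_bad_bad; right; left; left; exists u. Qed.

Lemma bad_II2 u : u != [::] -> all (fun x => x < 2) u -> bad (2 :: pad2 u).
Proof. by move=> u0 u2; apply: canon_bad_bad; right; left; right; exists u; rewrite pad2_shift. Qed.

Lemma bad_III m p : 1 <= m -> bad (0 :: rep [:: 2; 1] m ++ [:: 0; 2] ++ rep [:: 1; 2] p).
Proof. by move=> hm; apply: canon_bad_bad; right; right; left; exists m, p. Qed.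

Lemma bad_IV t : badIV t -> bad t.
Proof. by move=> h; apply: canon_bad_bad; right; right; right. Qed.

Lemma bad_swap01 t : all (fun x => x < 3) t -> bad (map (relabel 1 0 2) t) -> bad t.
Proof.
move=> t3 /(bad_relabel (a := 1) (b := 0) (c := 2) isT); rewrite -map_comp.
suff -> : map (relabel 1 0 2 \o relabel 1 0 2) t = t by [].
by elim: t t3 => [|x t IH] //= /andP[hx /IH ->]; case: x hx => [|[|[|x]]].
Qed.

(* Exhaustive check of the 60 flips of the eight type IV words. *)
Lemma badIV_flip_shrink t i : badIV t -> 1 <= i <= size t ->
  size (flip i t) < size t -> bad (flip i t).
Proof.
rewrite /badIV !inE => H.
repeat case/orP: H => [/eqP -> | H]; last move/eqP: H => ->;
case: i => [|[|[|[|[|[|[|[|[|[|i]]]]]]]]]] // _; rewrite /flip /= => // _.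
- exact: (@bad_I1 2).
- by apply: bad_swap01 => //; apply: (@bad_III 1 0).
- by apply: bad_swap01 => //; apply: (@bad_III 1 0).
- exact: bad_IV.
- exact: (@bad_I2 2).
- exact: bad_IV.
- exact: bad_IV.
- exact: (@bad_III 1 1).
- exact: bad_IV.
- by apply: bad_swap01 => //; apply: (@bad_III 1 1).
- exact: bad_IV.
- exact: (@bad_II1 [:: 1; 0; 0; 1]).
- exact: (@bad_II1 [:: 0; 1; 0; 1]).
- exact: bad_IV.
Qed.

Lemma badI_head_norepeat t a w r : badI t -> t <> a :: w ++ a :: r.
Proof.
case=> [[m [_ ->]]|[m [_ ->]]] [a0 Er].
  have : a \in rep [:: 1; 2] m by rewrite Er mem_cat mem_head orbT.
  by move/mem_rep; rewrite -a0.
have : a \in 2 :: rep [:: 1; 2] m by rewrite Er mem_cat mem_head orbT.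
by rewrite inE => /orP[|/mem_rep]; rewrite -a0.
Qed.

Lemma badII_flip_repeat t a w r : badII t -> t = a :: w ++ a :: r ->
  bad (rev w ++ a :: r).
Proof.
case=> [[u [u0 [u2 ->]]]|[u [u0 [u2 ->]]]]; rewrite -/(pad2 u) ?pad2_shift.
- case: u u0 u2 => [|x u] // _ /andP[x2 u2]; rewrite pad2_cons => -[<-].
  have x2' : x != 2 by apply/eqP => e; rewrite e in x2.
  case: w => [|y w] [e]; first by rewrite e eqxx in x2'.
  move=> /(pad2_split_sym x2') [u1 [u2' [Eu -> ->]]].
  rewrite -e rev_cons -cats1 rev_pad2 cat_cons -pad2_cons -pad2_cat.
  apply: bad_II2; first by case: (rev u1).
  by move: (u2 : all (fun x => x < 2) u); rewrite Eu !all_cat all_rev /= x2.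
- case=> <- /pad2_split2 [].
    by apply/negP => /(allP u2).
  move=> u1 [u2' [u10 Eu Ew ->]].
  have Ew' : rev w ++ [:: 2] = pad2 (rev u1).
    by have := rev_pad2 u1; rewrite -Ew rev_cat /= => -[].
  rewrite -cat1s catA Ew' -pad2_cat; apply: bad_II1.
    by move: u10; rewrite -!size_eq0 size_cat size_rev; lia.
  by move: u2; rewrite Eu !all_cat all_rev.
Qed.

Lemma badIII_flip_repeat t a w r : badIII t -> t = a :: w ++ a :: r ->
  bad (rev w ++ a :: r).
Proof.
case=> m [p [hm ->]] [<- /esym/cat_cons_notin_inj []].
- by apply/negP => /mem_rep; rewrite !inE.
- by apply/negP => /mem_rep; rewrite !inE.
move=> -> ->; rewrite rev_rep2 !rep2_pad2 -pad2_cons -pad2_cat.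
apply: bad_II1; first by rewrite -size_eq0 size_cat /= addnS.
by rewrite all_cat /= !all_nseq !orbT.
Qed.

Lemma canon_bad_flip_shrink t i : canon_bad t -> normalized t -> 1 <= i <= size t ->
  size (flip i t) < size t -> bad (flip i t).
Proof.
move=> Bt Hn Hi shrink.
case: Bt => [BI|[BII|[BIII|BIV]]]; last exact: badIV_flip_shrink.
all: case: (size_flip_cases Hn Hi) => [e|[a [w [r [Et ->]]]]];
  first by rewrite e ltnn in shrink.
all: rewrite Et flip_repeat -?Et //.
- by case: (badI_head_norepeat BI Et).
- exact: badII_flip_repeat BII Et.
- exact: badIII_flip_repeat BIII Et.
Qed.

Lemma bad_flip_shrink s i : normalized s -> bad s -> 1 <= i <= size s ->
  size (flip i s) < size s -> bad (flip i s).
Proof.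
move=> Hn [a [b [c [t [abc [Bt Es]]]]]].
have Hnt : normalized t by apply: (@normalized_map_inv (relabel a b c)); rewrite -Es.
rewrite Es flip_relabel // !size_map => Hi shrink.
by apply: bad_relabel => //; apply: canon_bad_flip_shrink.
Qed.

Lemma canon_bad_repeat_or_alt t : canon_bad t -> fully 3 t ->
  (exists x w r, t = x :: w ++ x :: r) \/
  exists x y z L, [/\ rev t = alt x y L ++ [:: z],
    [&& x < 3, y < 3 & z < 3] & [&& x != y, z != x & z != y]].
Proof.
move=> Bt Ft.
case: Bt => [[[m [hm ->]]|[m [hm ->]]]|[[[u [u0 [u2 Et]]]|[u [u0 [_ ->]]]]|[[m [p [hm ->]]]|BIV]]].
- right; exists 2, 1, 0, m.*2.
  by rewrite rev_cons -cats1 rev_rep2 rep2_alt.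
- right; exists 2, 1, 0, m.*2.+1.
  by rewrite rev_cat rev_rep2 -rep2_rcons_alt -catA.
- rewrite -/(pad2 u) in Et; case: u u0 u2 Et => [|x u] // _ /andP[x2 u2] Et.
  have {}u2 : all (fun x => x < 2) u := u2.
  case: (boolP (x \in u)) => xu.
    left; case/splitPr: xu Et => u1 u3 ->.
    by exists x, (2 :: pad2 u1), (2 :: pad2 u3); rewrite pad2_cons pad2_cat.
  have Eu : u = nseq (size u) (1 - x).
    apply/all_pred1P/allP => z zu /=; have := allP u2 z zu.
    have : z != x by apply: contraNneq xu => <-.
    lia.
  case Ek: (size u) Eu => [|k] Eu.
    by have := Ft (1 - x); rewrite Et Eu !inE; lia.
  right; exists 2, (1 - x), x, k.+1.*2.+1; split; try (apply/and3P; split; lia).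
  rewrite Et pad2_cons Eu -rep2_pad2 -[[:: x, 2 & _]]/([:: x; 2] ++ _) rev_cat rev_rep2.
  by rewrite -[rev _]/([:: 2] ++ [:: x]) catA rep2_rcons_alt.
- left; case: u u0 => [|x u] // _.
  by exists 2, [:: x], (pad2 u); rewrite pad2_shift.
- by left; exists 0, (rep [:: 2; 1] m), (2 :: rep [:: 1; 2] p).
- left; move: BIV; rewrite /badIV !inE.
  repeat case/orP => [/eqP ->|]; last move/eqP => ->.
  + by exists 2, [:: 1; 0], [:: 1; 2].
  + by exists 0, [:: 2; 1], [:: 1; 2].
  + by exists 0, [:: 1; 2], [:: 2; 1; 2].
  + by exists 1, [:: 2; 0], [:: 2; 1; 2].
  + by exists 0, [:: 2; 1], [:: 1; 2; 1; 2].
  + by exists 2, [:: 0], [:: 1; 0; 2; 1; 2].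
  + by exists 0, [:: 2], [:: 2; 1; 0; 2; 1; 2].
  + by exists 1, [:: 2; 0], [:: 2; 0; 2; 1; 2].
Qed.

Lemma bad_shrinkable_or_reaches s : normalized s -> bad s /\ fully 3 s ->
  shrinkable s \/ reaches_size 3 (size s - 3).+1 s.
Proof.
move=> Hn [B F]; have Hs := bad_size B F.
case: B => a [b [c [t [abc [Bt Es]]]]]; rewrite {}Es in Hn F Hs *.
have Ft := fully_relabel abc Bt F.
case: (canon_bad_repeat_or_alt Bt Ft) => [[x [w [r Et]]]|[x [y [z [L [Er xyz3 xyz]]]]]].
  by left; move: Hn; rewrite Et map_cons map_cat map_cons; apply: head_repeat_shrinkable.
right; case/and3P: xyz3 => x3 y3 z3; case/and3P: xyz => xy zx zy.
apply: (@rev_alt_reaches_size3 _ (relabel a b c x) (relabel a b c y) (relabel a b c z) L) => //.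
- by rewrite -map_rev Er map_cat map_alt.
- exact: relabel_neq.
- exact: relabel_neq.
- exact: relabel_neq.
Qed.

Theorem lemma3p4 (s : seq nat) :
  normalized s -> fully 3 s -> bad s -> grouping_distance 3 s (size s - 2).
Proof.
move=> Hn F B.
have -> : size s - 2 = (size s - 3).+1 by have := bad_size B F; lia.
apply: (@shrink_closed_grouping_distance (fun s => bad s /\ fully 3 s)) => //.
- by move=> t [Bt Ft]; apply: bad_size.
- move=> t i Hnt [Bt Ft] Hi shrink; split; first exact: bad_flip_shrink.
  by move=> x; rewrite mem_flip Ft.
- exact: bad_shrinkable_or_reaches.
Qed.
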